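(* For integers $n,m\geq 1$, the flip graph $\mathcal{T}(C(2m,2n+1))$ of the quadriculated cylinder $C(2m,2n+1)$ is connected.
   Context: The quadriculated cylinder $C(m,n)$ is obtained from an $m\times n$ chessboard ($m$ rows each of $n$ unit squares) by identifying its left and right sides. A domino is the union of two adjacent unit squares; a tiling is a collection of dominoes with disjoint interiors whose union is the region. A flip replaces two parallel dominoes forming a $2\times 2$ block by the other two dominoes covering that block. The flip graph has the tilings as vertices, two tilings being adjacent iff one is obtained from the other by a single flip. *)

From mathcomp Require Import all_boot.
From Stdlib Require Import Relations.
Set Implicit Arguments. Unset Strict Implicit. Unset Printing Implicit Defensive.

(* Unit squares of the quadriculated cylinder C(r,c): (row, column),
   rows 0..r-1, columns 0..c-1 taken cyclically (left/right sides identified). *)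
Definition square (r c : nat) := ('I_r * 'I_c)%type.

Definition col_next (c : nat) (j : 'I_c) : 'I_c := ordS j.

Definition adjacent (r c : nat) (a b : square r c) : bool :=
  (a != b) &&
  (((a.1 == b.1) && ((b.2 == col_next a.2) || (a.2 == col_next b.2))) ||
   ((a.2 == b.2) && (((a.1 : nat).+1 == b.1) || ((b.1 : nat).+1 == a.1)))).

Definition domino (r c : nat) (d : {set square r c}) : Prop :=
  exists a b : square r c, adjacent a b /\ d = [set a; b].

Definition tiling (r c : nat) (t : {set {set square r c}}) : Prop :=
  partition t [set: square r c] /\ forall d, d \in t -> domino d.

Definition flip (r c : nat) (t1 t2 : {set {set square r c}}) : Prop :=
  exists (i i' : 'I_r) (j : 'I_c),
    (i' : nat) = (i : nat).+1 /\
    let a := (i, j) in let b := (i, col_next j) in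
    let a' := (i', j) in let b' := (i', col_next j) in
    let H1 := [set a; b] in let H2 := [set a'; b'] in
    let V1 := [set a; a'] in let V2 := [set b; b'] in
    ((H1 \in t1 /\ H2 \in t1 /\ t2 = (t1 :\: [set H1; H2]) :|: [set V1; V2]) \/
     (V1 \in t1 /\ V2 \in t1 /\ t2 = (t1 :\: [set V1; V2]) :|: [set H1; H2])).

Definition flip_edge (r c : nat) (t1 t2 : {set {set square r c}}) : Prop :=
  tiling t1 /\ tiling t2 /\ flip t1 t2.

Definition flip_graph_connected (r c : nat) : Prop :=
  (exists t : {set {set square r c}}, tiling t) /\
  forall t1 t2 : {set {set square r c}}, tiling t1 -> tiling t2 ->
    clos_refl_trans _ (@flip_edge r c) t1 t2.

From Stdlib Require Import Relations.
From mathcomp Require Import all_boot zify.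
Set Implicit Arguments. Unset Strict Implicit. Unset Printing Implicit Defensive.

(* Every tiling is joined by flips to [std_tiling], the tiling by vertical dominoes
   on the row pairs (2k, 2k+1), and this is done one row pair (l, l+1) at a time,
   from the bottom up.  While some column of the pair is not covered by a vertical
   domino, the tiling contains a staircase: a horizontal domino on columns j, j+1 of
   row l and a vertical one on column j+2 of rows l, l+1.  Otherwise the missing
   verticals would propagate around the cylinder, so row l would be tiled by
   horizontal dominoes alone, and these would alternate around a cycle of odd length.
   A staircase is turned into the two verticals on columns j, j+1 by flips that
   change no other domino reaching down to row l: depending on the dominoes covering
   (l+1, j) and (l+1, j+1), one flip suffices, or two do, or a staircase appears one
   row higher and one column to the left, where induction on the height applies. *)

Section CyclicColumns.
Variable n : nat.
Implicit Types (y : 'I_n) (P : pred 'I_n).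

Lemma col_nextE y : (col_next y : nat) = if y.+1 == n then 0 else y.+1.
Proof.
rewrite /col_next /ordS /=; case: eqP => [->|ne]; first by rewrite modnn.
by rewrite modn_small //; have := ltn_ord y; lia.
Qed.

Lemma col_nextK : cancel (@col_next n) (@ord_pred n).
Proof. exact: ordSK. Qed.

Lemma col_next_predK : cancel (@ord_pred n) (@col_next n).
Proof. exact: ord_predK. Qed.

Lemma iter_col_next y k : (iter k (@col_next n) y : nat) = (y + k) %% n.
Proof.
elim: k => [|k IHk]; first by rewrite addn0 modn_small.
rewrite iterS /col_next /ordS /= -/(col_next _) IHk.
by rewrite -addn1 modnDml -addnA addn1.
Qed.

Lemma iter_col_next_period y : iter n (@col_next n) y = y.
Proof. by apply: val_inj; rewrite /= iter_col_next modnDr modn_small. Qed.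

Lemma col_next_ind P y0 :
  P y0 -> (forall y, P y -> P (col_next y)) -> forall y, P y.
Proof.
move=> P0 PS y.
have -> : y = iter (y + n - y0) (@col_next n) y0.
  apply: val_inj; rewrite /= iter_col_next.
  have -> : y0 + (y + n - y0) = y + n by have := ltn_ord y0; lia.
  by rewrite modnDr modn_small.
by elim: (y + n - y0) => //= k; apply: PS.
Qed.

Lemma odd_cycle_not_alternating P :
  odd n -> ~ (forall y, P (col_next y) = ~~ P y).
Proof.
move=> odd_n alt; have y : 'I_n by exists 0; case: n odd_n.
have iterP k : P (iter k (@col_next n) y) = P y (+) odd k.
  by elim: k => [|k IHk]; rewrite ?addbF //= alt IHk addbN.
by have := iterP n; rewrite iter_col_next_period odd_n addbT; case: (P y).
Qed.

End CyclicColumns.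

Section Tilings.
Variables r c : nat.
Notation square := (square r c).
Notation tiles := {set {set square}}.
Implicit Types (t : tiles) (D X Y : {set square}) (s : square) (i : 'I_r) (j : 'I_c).

Lemma tiling_domino t D : tiling t -> D \in t -> domino D.
Proof. by case=> _; apply. Qed.

Lemma tiling_cover t s : tiling t -> exists2 D, D \in t & s \in D.
Proof.
case=> /and3P [/eqP cover_t _ _] _.
have : s \in cover t by rewrite cover_t inE.
by case/bigcupP=> D; exists D.
Qed.

Lemma tiling_uniq t D1 D2 s : tiling t -> D1 \in t -> D2 \in t ->
  s \in D1 -> s \in D2 -> D1 = D2.
Proof.
case=> /and3P [_ /trivIsetP triv_t _] _ D1t D2t sD1 sD2.
case: (eqVneq D1 D2) => // ne12.
by rewrite (disjointFr (triv_t _ _ D1t D2t ne12) sD1) in sD2.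
Qed.

Lemma tilingI t : (forall D, D \in t -> domino D) ->
  (forall s, exists2 D, D \in t & s \in D) ->
  (forall D1 D2 s, D1 \in t -> D2 \in t -> s \in D1 -> s \in D2 -> D1 = D2) ->
  tiling t.
Proof.
move=> dom_t cover_t uniq_t; split=> //; apply/and3P; split.
- apply/eqP/setP => s; rewrite inE; apply/bigcupP.
  by have [D] := cover_t s; exists D.
- apply/trivIsetP => D1 D2 D1t D2t; apply: contraR => /pred0Pn [s /andP [sD1 sD2]].
  by rewrite (uniq_t _ _ _ D1t D2t sD1 sD2).
- apply/negP => /dom_t [a [b [_ D0]]].
  by have := set21 a b; rewrite -D0 inE.
Qed.

Definition exchange t X1 X2 Y1 Y2 : tiles := (t :\: [set X1; X2]) :|: [set Y1; Y2].

Lemma exchange_keep t X1 X2 Y1 Y2 D :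
  D \in t -> D != X1 -> D != X2 -> D \in exchange t X1 X2 Y1 Y2.
Proof. by rewrite !inE => -> /negbTE-> /negbTE->. Qed.

Lemma exchange_in1 t X1 X2 Y1 Y2 : Y1 \in exchange t X1 X2 Y1 Y2.
Proof. by rewrite !inE eqxx orbT. Qed.

Lemma exchange_in2 t X1 X2 Y1 Y2 : Y2 \in exchange t X1 X2 Y1 Y2.
Proof. by rewrite !inE eqxx !orbT. Qed.

Lemma exchangeK t X1 X2 Y1 Y2 : X1 \in t -> X2 \in t -> Y1 \notin t -> Y2 \notin t ->
  exchange (exchange t X1 X2 Y1 Y2) Y1 Y2 X1 X2 = t.
Proof.
move=> X1t X2t Y1t Y2t; apply/setP => D; rewrite !inE.
case: (eqVneq D X1) => [->|_]; first by rewrite X1t !orbT.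
case: (eqVneq D X2) => [->|_]; first by rewrite X2t !orbT.
case: (eqVneq D Y1) => [->|_]; first by rewrite (negbTE Y1t).
by case: (eqVneq D Y2) => [->|_]; rewrite ?(negbTE Y2t) ?andbF ?orbF.
Qed.

Lemma tiling_exchange t X1 X2 Y1 Y2 : tiling t -> X1 \in t -> X2 \in t ->
  X1 :|: X2 = Y1 :|: Y2 -> [disjoint Y1 & Y2] -> domino Y1 -> domino Y2 ->
  tiling (exchange t X1 X2 Y1 Y2).
Proof.
move=> tt X1t X2t eX disjY domY1 domY2.
have inY s : (s \in Y1) || (s \in Y2) = (s \in X1) || (s \in X2).
  by rewrite -!in_setU eX.
have old_outside D s : D \in t -> D != X1 -> D != X2 -> s \in D ->
    (s \in Y1) || (s \in Y2) = false.
  move=> Dt DX1 DX2 sD; rewrite inY; apply/negP => /orP [] sX.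
  - by rewrite (tiling_uniq tt Dt X1t sD sX) eqxx in DX1.
  - by rewrite (tiling_uniq tt Dt X2t sD sX) eqxx in DX2.
apply: tilingI.
- move=> D; rewrite !inE => /orP [/andP [_ Dt]|/orP [] /eqP->] //.
  exact: tiling_domino Dt.
- move=> s; have [D Dt sD] := tiling_cover s tt.
  case: (boolP ((D == X1) || (D == X2))) => DX.
  + have : (s \in Y1) || (s \in Y2) by rewrite inY; case/orP: DX => /eqP <-; rewrite sD ?orbT.
    by case/orP => sY; [exists Y1|exists Y2]; rewrite ?exchange_in1 ?exchange_in2.
  + by exists D => //; rewrite !inE DX Dt.
have in_swapP D : D \in exchange t X1 X2 Y1 Y2 ->
    [/\ D \in t, D != X1 & D != X2] \/ (D = Y1 \/ D = Y2).
  by rewrite !inE => /orP [/andP [] /norP [] *|/orP [] /eqP ->]; [left|right; left|right; right].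
move=> D1 D2 s /in_swapP hD1 /in_swapP hD2 sD1 sD2.
case: hD1 hD2 => [[D1t D1X1 D1X2]|eD1] [[D2t D2X1 D2X2]|eD2].
- exact: tiling_uniq tt D1t D2t sD1 sD2.
- by have := old_outside _ _ D1t D1X1 D1X2 sD1; case: eD2 => <-; rewrite sD2 ?orbT.
- by have := old_outside _ _ D2t D2X1 D2X2 sD2; case: eD1 => <-; rewrite sD1 ?orbT.
move: sD1 sD2; case: eD1 eD2 => -> [] -> // sY sY'.
- by rewrite (disjointFr disjY sY) in sY'.
- by rewrite (disjointFr disjY sY') in sY.
Qed.

Notation reach := (clos_refl_trans _ (@flip_edge r c)).

Definition hdom (i : 'I_r) (j : 'I_c) : {set square} := [set (i, j); (i, col_next j)].
Definition vdom (i i' : 'I_r) (j : 'I_c) : {set square} := [set (i, j); (i', j)].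

Lemma flipE t1 t2 : flip t1 t2 =
  exists (i i' : 'I_r) (j : 'I_c), i' = i.+1 :> nat /\
    let H1 := hdom i j in let H2 := hdom i' j in
    let V1 := vdom i i' j in let V2 := vdom i i' (col_next j) in
    (H1 \in t1 /\ H2 \in t1 /\ t2 = exchange t1 H1 H2 V1 V2) \/
    (V1 \in t1 /\ V2 \in t1 /\ t2 = exchange t1 V1 V2 H1 H2).
Proof. by []. Qed.

Lemma mem_hdomL {i j} : (i, j) \in hdom i j. Proof. exact: set21. Qed.
Lemma mem_hdomR {i j} : (i, col_next j) \in hdom i j. Proof. exact: set22. Qed.
Lemma mem_vdomB {i i' j} : (i, j) \in vdom i i' j. Proof. exact: set21. Qed.
Lemma mem_vdomT {i i' j} : (i', j) \in vdom i i' j. Proof. exact: set22. Qed.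

Lemma vdom_domino (i i' : 'I_r) j : i' = i.+1 :> nat -> domino (vdom i i' j).
Proof.
move=> ei; exists (i, j), (i', j); split => //.
by rewrite /adjacent /= !xpair_eqE -!val_eqE /= ei !eqxx /= orbT; lia.
Qed.

Lemma block_union (i i' : 'I_r) j :
  hdom i j :|: hdom i' j = vdom i i' j :|: vdom i i' (col_next j).
Proof. by apply/setP => s; rewrite !inE orbACA. Qed.

Lemma disjoint_hdom_rows (i i' : 'I_r) j : i != i' -> [disjoint hdom i j & hdom i' j].
Proof.
move=> ne_i; apply/pred0P => -[x y] /=; rewrite !inE !xpair_eqE.
by case: (x =P i) => [->|_]; rewrite ?(negbTE ne_i) ?andbF.
Qed.

Lemma adjacent_sym (a b : square) : adjacent a b -> adjacent b a.
Proof.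
rewrite /adjacent eq_sym => /andP [-> /= h].
by case/orP: h => /andP [eab h]; apply/orP; [left|right]; rewrite eq_sym eab /= orbC.
Qed.

Variant covering_spec t (x : 'I_r) (y : 'I_c) : Prop :=
  | CoverR of hdom x y \in t
  | CoverL of hdom x (ord_pred y) \in t
  | CoverU (x' : 'I_r) of x' = x.+1 :> nat & vdom x x' y \in t
  | CoverD (x' : 'I_r) of x'.+1 = x :> nat & vdom x' x y \in t.

Lemma coveringP t x y : tiling t -> covering_spec t x y.
Proof.
move=> tt; have [D Dt sD] := tiling_cover (x, y) tt.
have [a [b [ab eD]]] := tiling_domino tt Dt.
have [[x' y'] []] : exists b', adjacent (x, y) b' /\ D = [set (x, y); b'].
  move: sD; rewrite eD !inE => /orP [] /eqP eq_xy; first by exists b; rewrite eq_xy.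
  by exists a; rewrite eq_xy setUC; split => //; apply: adjacent_sym.
rewrite /adjacent /= => /andP [_ /orP [] /andP [/eqP <- /orP [] /eqP e]] eD'; move: Dt; rewrite eD'.
- by rewrite e; apply: CoverR.
- by rewrite e setUC => Ht; apply: CoverL; rewrite col_nextK.
- by apply: CoverU.
- by rewrite setUC; apply: CoverD.
Qed.

Section WideCylinder.
Hypothesis c_gt1 : 1 < c.

Lemma col_next_neq (j : 'I_c) : col_next j != j.
Proof. by apply/eqP => /(f_equal (@nat_of_ord _)); rewrite col_nextE; case: eqP; lia. Qed.

Lemma hdom_domino i j : domino (hdom i j).
Proof.
exists (i, j), (i, col_next j); split => //.
by rewrite /adjacent /= xpair_eqE !eqxx eq_sym (negbTE (col_next_neq j)).
Qed.

Lemma disjoint_vdom_cols (i i' : 'I_r) j : [disjoint vdom i i' j & vdom i i' (col_next j)].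
Proof.
apply/pred0P => -[x y] /=; rewrite !inE !xpair_eqE.
by case: (y =P j) => [->|_]; rewrite ?[j == _]eq_sym ?(negbTE (col_next_neq j)) ?andbF.
Qed.

Lemma hdom_neq_vdom i j a a' b : hdom i j != vdom a a' b.
Proof.
apply/eqP => e.
have col_b s : s \in vdom a a' b -> s.2 = b by rewrite !inE => /orP [] /eqP ->.
have := col_b (i, col_next j); have := col_b (i, j).
rewrite -e !inE !eqxx orbT /= => /(_ isT) -> /(_ isT) /eqP.
by rewrite (negbTE (col_next_neq b)).
Qed.

Lemma hdom_vdom_clash t i j a a' b s : tiling t ->
  hdom i j \in t -> vdom a a' b \in t -> s \in hdom i j -> s \in vdom a a' b -> False.
Proof.
move=> tt Ht Vt sH sV.
by have := hdom_neq_vdom i j a a' b; rewrite (tiling_uniq tt Ht Vt sH sV) eqxx.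
Qed.

Lemma flip_hv t (i i' : 'I_r) j : i' = i.+1 :> nat -> tiling t ->
  hdom i j \in t -> hdom i' j \in t ->
  flip_edge t (exchange t (hdom i j) (hdom i' j) (vdom i i' j) (vdom i i' (col_next j))).
Proof.
move=> ei tt H1t H2t; do 2 split => //; last by exists i, i', j; split; [|left].
apply: tiling_exchange; rewrite ?block_union ?disjoint_vdom_cols //; exact: vdom_domino.
Qed.

Lemma flip_vh t (i i' : 'I_r) j : i' = i.+1 :> nat -> tiling t ->
  vdom i i' j \in t -> vdom i i' (col_next j) \in t ->
  flip_edge t (exchange t (vdom i i' j) (vdom i i' (col_next j)) (hdom i j) (hdom i' j)).
Proof.
move=> ei tt V1t V2t; do 2 split => //; last by exists i, i', j; split; [|right].
apply: tiling_exchange; rewrite -?block_union ?disjoint_hdom_rows //; try exact: hdom_domino.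
by rewrite -val_eqE /= ei; lia.
Qed.

Lemma flip_edge_sym t1 t2 : flip_edge t1 t2 -> flip_edge t2 t1.
Proof.
move=> [tt1 [tt2 fl]]; split=> //; split=> //; move: fl; rewrite !flipE.
move=> [i [i' [j [ei /= [[H1t [H2t ->]]|[V1t [V2t ->]]]]]]].
- have V1t : vdom i i' j \notin t1.
    by apply/negP => V1t; apply: (hdom_vdom_clash tt1 H1t V1t mem_hdomL mem_vdomB).
  have V2t : vdom i i' (col_next j) \notin t1.
    by apply/negP => V2t; apply: (hdom_vdom_clash tt1 H1t V2t mem_hdomR mem_vdomB).
  exists i, i', j; split => //; right.
  by rewrite exchange_in1 exchange_in2 exchangeK.
- have H1t : hdom i j \notin t1.
    by apply/negP => H1t; apply: (hdom_vdom_clash tt1 H1t V1t mem_hdomL mem_vdomB).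
  have H2t : hdom i' j \notin t1.
    by apply/negP => H2t; apply: (hdom_vdom_clash tt1 H2t V1t mem_hdomL mem_vdomT).
  exists i, i', j; split => //; left.
  by rewrite exchange_in1 exchange_in2 exchangeK.
Qed.

Lemma reach_sym t1 t2 : reach t1 t2 -> reach t2 t1.
Proof.
elim=> [{}t1 {}t2 /flip_edge_sym|t|? ? ? _ r12 _ r23]; first exact: rt_step.
- exact: rt_refl.
- exact: rt_trans r23 r12.
Qed.

Definition above (l : nat) D := [forall s in D, l < s.1].

Lemma aboveP l D : reflect (forall s, s \in D -> l < s.1) (above l D).
Proof. exact: forall_inP. Qed.

Lemma above_vdom l (i i' : 'I_r) j : l < i -> i' = i.+1 :> nat -> above l (vdom i i' j).
Proof. by move=> li ei; apply/aboveP => s; rewrite !inE => /orP [] /eqP -> /=; lia. Qed.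

Lemma above_hdom l i j : l < i -> above l (hdom i j).
Proof. by move=> li; apply/aboveP => s; rewrite !inE => /orP [] /eqP ->. Qed.

Lemma not_above l D s : s \in D -> s.1 <= l -> ~~ above l D.
Proof. by move=> sD sl; apply/aboveP => /(_ s sD); rewrite ltnNge sl. Qed.

Lemma not_above_mono l l' D : l <= l' -> ~~ above l D -> ~~ above l' D.
Proof.
by move=> ll'; apply: contra => /aboveP Dl'; apply/aboveP => s /Dl'; apply: leq_ltn_trans.
Qed.

Lemma neq_above l D X : ~~ above l D -> above l X -> D != X.
Proof. by move=> nD aX; apply: contraNneq nD => ->. Qed.

Definition verticalized (l l1 : 'I_r) (j : 'I_c) t t' :=
  [/\ reach t t', tiling t', vdom l l1 j \in t', vdom l l1 (col_next j) \in t' &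
      forall D, D \in t -> D != hdom l j -> ~~ above l D -> D \in t'].

Lemma reach_verticalized (l l1 : 'I_r) j t t1 t2 : reach t t1 ->
  (forall D, D \in t -> ~~ above l D -> D \in t1) ->
  verticalized l l1 j t1 t2 -> verticalized l l1 j t t2.
Proof.
move=> r01 keep01 [r12 tt2 V1 V2 keep12]; split=> // [|D Dt DH Dl].
- exact: rt_trans r01 r12.
- by apply: keep12 => //; apply: keep01.
Qed.

Lemma verticalize_flip (l l1 : 'I_r) j t : l1 = l.+1 :> nat -> tiling t ->
  hdom l j \in t -> hdom l1 j \in t ->
  verticalized l l1 j t (exchange t (hdom l j) (hdom l1 j) (vdom l l1 j) (vdom l l1 (col_next j))).
Proof.
move=> e1 tt H0 H1; have fl := flip_hv e1 tt H0 H1.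
split; [exact: rt_step|by case: fl => _ []|exact: exchange_in1|exact: exchange_in2|].
move=> D Dt DH Dl; apply: exchange_keep => //; apply: neq_above Dl _.
by apply: above_hdom; rewrite e1.
Qed.

Lemma verticalize_staircase (l l1 l2 : 'I_r) j t :
  l1 = l.+1 :> nat -> l2 = l1.+1 :> nat -> tiling t -> hdom l j \in t ->
  vdom l1 l2 j \in t -> vdom l1 l2 (col_next j) \in t ->
  exists t', verticalized l l1 j t t'.
Proof.
move=> e1 e2 tt H0 V1 V2; have fl := flip_vh e2 tt V1 V2.
set t1 := exchange _ _ _ _ _ in fl.
have tt1 : tiling t1 by case: fl => _ [].
have H0' : hdom l j \in t1 by apply: exchange_keep; rewrite ?hdom_neq_vdom.
have [t2 vt2] : exists t2, verticalized l l1 j t1 t2.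
  by eexists; apply: verticalize_flip e1 tt1 H0' (exchange_in1 _ _ _ _ _).
exists t2; apply: reach_verticalized (rt_step _ _ _ _ fl) _ vt2.
move=> D Dt Dl; apply: exchange_keep => //; apply: neq_above Dl _; apply: above_vdom => //; lia.
Qed.

Lemma verticalize_shifted (l l1 x : 'I_r) j t t1 :
  l1 = l.+1 :> nat -> x = l1.+1 :> nat -> tiling t -> hdom l j \in t ->
  vdom l1 x (col_next j) \in t -> verticalized l1 x (ord_pred j) t t1 ->
  exists t', verticalized l l1 j t t'.
Proof.
move=> e1 ex tt H0 V [r01 tt1 V1 V2 keep01]; rewrite col_next_predK in V2.
have l_l1 : l <= l1 by rewrite e1.
have Hpred_above : above l (hdom l1 (ord_pred j)) by apply: above_hdom; rewrite e1.
have H0' : hdom l j \in t1.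
  apply: keep01 => //; first exact: neq_above (not_above mem_hdomL _) Hpred_above.
  exact: not_above_mono l_l1 (not_above mem_hdomL (leqnn _)).
have V' : vdom l1 x (col_next j) \in t1.
  by apply: keep01; rewrite // 1?eq_sym ?hdom_neq_vdom // (not_above mem_vdomB).
have [t2 vt2] := verticalize_staircase e1 ex tt1 H0' V2 V'.
exists t2; apply: reach_verticalized r01 _ vt2 => D Dt Dl.
by apply: keep01 => //; [exact: neq_above Hpred_above|exact: not_above_mono Dl].
Qed.

Lemma verticalize (l l1 : 'I_r) j t : l1 = l.+1 :> nat -> tiling t ->
  hdom l j \in t -> vdom l l1 (col_next (col_next j)) \in t ->
  exists t', verticalized l l1 j t t'.
Proof.
have [k] := ubnP (r - l); elim: k => // k IHk in l l1 j t *.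
move=> rlk e1 tt H0 V.
case: (coveringP l1 (col_next j) tt) => [H1|H1|x ex V1|x ex V1].
- by case: (hdom_vdom_clash tt H1 V mem_hdomR mem_vdomT).
- by rewrite col_nextK in H1; eexists; apply: verticalize_flip.
- case: (coveringP l1 j tt) => [H1|H1|x' ex' V2|x' ex' V2].
  + by case: (hdom_vdom_clash tt H1 V1 mem_hdomR mem_vdomB).
  + have V1' : vdom l1 x (col_next (col_next (ord_pred j))) \in t by rewrite col_next_predK.
    have rl1k : r - l1 < k by have := ltn_ord l1; lia.
    have [t1 vt1] := IHk l1 x (ord_pred j) t rl1k ex tt H1 V1'.
    exact: verticalize_shifted e1 ex tt H0 V1 vt1.
  + have x'x : x' = x by apply: val_inj; rewrite /= ex ex'.
    by rewrite x'x in V2; apply: verticalize_staircase e1 ex tt H0 V2 V1.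
  + have x'l : x' = l by apply: val_inj => /=; lia.
    by rewrite x'l in V2; case: (hdom_vdom_clash tt H0 V2 mem_hdomL mem_vdomB).
- have xl : x = l by apply: val_inj => /=; lia.
  by rewrite xl in V1; case: (hdom_vdom_clash tt H0 V1 mem_hdomR mem_vdomB).
Qed.

Section EvenHeightOddWidth.
Hypothesis r_even : ~~ odd r.
Hypothesis c_odd : odd c.

Definition std_tiling : tiles := [set D | [exists x : 'I_r, exists x' : 'I_r, exists y,
  [&& ~~ odd x, x' == x.+1 :> nat & D == vdom x x' y]]].

Lemma std_tilingP D : reflect
  (exists (x x' : 'I_r) y, [/\ ~~ odd x, x' = x.+1 :> nat & D = vdom x x' y])
  (D \in std_tiling).
Proof.
rewrite inE; apply: (iffP existsP) => [[x /existsP [x' /existsP [y /and3P [? /eqP ? /eqP ?]]]]|].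
- by exists x, x', y.
- case=> x [x' [y [x_even ex ->]]]; exists x; apply/existsP; exists x'; apply/existsP; exists y.
  by rewrite x_even ex !eqxx.
Qed.

Lemma tiling_std : tiling std_tiling.
Proof.
apply: tilingI.
- by move=> D /std_tilingP [x [x' [y [_ ex ->]]]]; apply: vdom_domino.
- move=> [x y]; have [x_odd|x_even] := boolP (odd x).
  + have lt : x.-1 < r by have := ltn_ord x; lia.
    exists (vdom (Ordinal lt) x y); last exact: mem_vdomT.
    by apply/std_tilingP; exists (Ordinal lt), x, y; split => //=; lia.
  + have lt : x.+1 < r by have := ltn_ord x; lia.
    exists (vdom x (Ordinal lt) y); last exact: mem_vdomB.
    by apply/std_tilingP; exists x, (Ordinal lt), y.
move=> _ _ [x y] /std_tilingP [x1 [x1' [y1 [ev1 e1 ->]]]] /std_tilingP [x2 [x2' [y2 [ev2 e2 ->]]]].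
rewrite !inE !xpair_eqE -!val_eqE /= => s1 s2.
have x12 : x1 = x2 by apply: val_inj => /=; lia.
have x12' : x1' = x2' by apply: val_inj => /=; lia.
have y12 : y1 = y2 by apply: val_inj => /=; lia.
by rewrite x12 x12' y12.
Qed.

Definition std_below (i : nat) t :=
  forall D, D \in std_tiling -> (forall s, s \in D -> s.1 < i) -> D \in t.

Lemma std_below0 t : std_below 0 t.
Proof. by move=> D /std_tilingP [x [x' [y [_ _ ->]]]] /(_ _ mem_vdomB). Qed.

Lemma std_below_top t : tiling t -> std_below r t -> t = std_tiling.
Proof.
move=> tt below; have std_t D : D \in std_tiling -> D \in t.
  by move=> Dstd; apply: below Dstd _ => -[x y] _; apply: ltn_ord.
apply/setP => D; apply/idP/idP; last exact: std_t.
move=> Dt; have [a [b [_ eD]]] := tiling_domino tt Dt.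
have [E Estd aE] := tiling_cover a tiling_std.
by rewrite (tiling_uniq tt Dt (std_t _ Estd) (_ : a \in D) aE) // eD set21.
Qed.

Lemma col_next2_neq (j : 'I_c) : col_next (col_next j) != j.
Proof.
apply/eqP => /(f_equal (@nat_of_ord _)); rewrite !col_nextE.
by have := ltn_ord j; case: (j.+1 =P c) => ? /=; case: eqP => ?; lia.
Qed.

Lemma hdom_next_neq i j : hdom i (col_next j) != hdom i j.
Proof.
apply/eqP => e; have := mem_hdomL : (i, j) \in hdom i j.
rewrite -e !inE !xpair_eqE !eqxx /= eq_sym (negbTE (col_next_neq j)).
by rewrite eq_sym (negbTE (col_next2_neq j)).
Qed.

Section RowPair.
Variables l l1 : 'I_r.
Hypothesis l_even : ~~ odd l.
Hypothesis e1 : l1 = l.+1 :> nat.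

Lemma row_cover_horizontal t y : tiling t -> std_below l t -> vdom l l1 y \notin t ->
  hdom l y \in t \/ hdom l (ord_pred y) \in t.
Proof.
move=> tt below Vt; case: (coveringP l y tt) => [H|H|x ex V|x ex V]; [by left|by right| |].
- have xl1 : x = l1 by apply: val_inj => /=; lia.
  by rewrite xl1 in V; rewrite V in Vt.
- have lt : x.-1 < r by have := ltn_ord x; lia.
  have V' : vdom (Ordinal lt) x y \in t.
    apply: below; first by apply/std_tilingP; exists (Ordinal lt), x, y; split => //=; lia.
    by move=> s; rewrite !inE => /orP [] /eqP -> /=; lia.
  have := mem_vdomT : (l, y) \in vdom x l y.
  rewrite (tiling_uniq tt V V' mem_vdomB mem_vdomT) !inE !xpair_eqE -!val_eqE /=; lia.
Qed.

Lemma hdom_alternate t : tiling t -> std_below l t -> (forall y, vdom l l1 y \notin t) ->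
  forall y, (hdom l (col_next y) \in t) = ~~ (hdom l y \in t).
Proof.
move=> tt below noV y; case Hy: (hdom l y \in t) => /=.
- apply/negbTE/negP => Hy'.
  by have := hdom_next_neq l y; rewrite (tiling_uniq tt Hy' Hy mem_hdomL mem_hdomR) eqxx.
- by case: (row_cover_horizontal tt below (noV (col_next y))); rewrite // col_nextK Hy.
Qed.

Lemma exists_staircase t y0 : tiling t -> std_below l t -> vdom l l1 y0 \notin t ->
  exists j, hdom l j \in t /\ vdom l l1 (col_next (col_next j)) \in t.
Proof.
move=> tt below V0.
case: (boolP [exists j, (hdom l j \in t) && (vdom l l1 (col_next (col_next j)) \in t)]).
  by case/existsP => j /andP; exists j.
move=> no_stair; exfalso.
apply: (odd_cycle_not_alternating (P := fun y => hdom l y \in t) c_odd).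
apply: hdom_alternate => //.
apply: (col_next_ind (P := fun y => vdom l l1 y \notin t) V0) => y Vy.
case: (row_cover_horizontal tt below Vy) => Hy.
- by apply/negP => V; apply: (hdom_vdom_clash tt Hy V mem_hdomR mem_vdomB).
- apply: contraNN no_stair => V; apply/existsP; exists (ord_pred y).
  by rewrite Hy col_next_predK V.
Qed.

Definition gaps t := [set y | vdom l l1 y \notin t].

Lemma fill_gap t y0 : tiling t -> std_below l t -> y0 \in gaps t ->
  exists t', [/\ reach t t', tiling t', std_below l t' & gaps t' \proper gaps t].
Proof.
rewrite inE => tt below V0.
have [j [H V]] := exists_staircase tt below V0.
have [t' [r' tt' V1 V2 keep]] := verticalize e1 tt H V.
exists t'; split => //.
- move=> D Dstd Dlow; have [x [x' [y [_ _ eD]]]] := std_tilingP _ Dstd.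
  have xl : x < l by apply: (Dlow (x, y)); rewrite eD mem_vdomB.
  apply: keep; first exact: below.
  + by rewrite eD eq_sym hdom_neq_vdom.
  + by rewrite eD (not_above mem_vdomB) // ltnW.
apply/properP; split.
- apply/subsetP => y; rewrite !inE; apply: contraNN => Vy.
  by apply: keep; rewrite // 1?eq_sym ?hdom_neq_vdom // (not_above mem_vdomB).
- exists j; rewrite !inE ?V1 //.
  by apply/negP => Vj; apply: (hdom_vdom_clash tt H Vj mem_hdomL mem_vdomB).
Qed.

Lemma std_below_pair t : std_below l t -> (forall y, vdom l l1 y \in t) -> std_below l.+2 t.
Proof.
move=> below allV D Dstd Dlow; have [x [x' [y [x_even ex eD]]]] := std_tilingP _ Dstd.
rewrite eD in Dlow *; have := Dlow _ mem_vdomT => /= x'l.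
case: (ltnP x l) => [xl|lx].
- by apply: below; rewrite -?eD // => s; rewrite eD !inE => /orP [] /eqP -> /=; lia.
- have xl : x = l by apply: val_inj => /=; lia.
  have x'l1 : x' = l1 by apply: val_inj => /=; lia.
  by rewrite xl x'l1.
Qed.

Lemma fill_row_pair t : tiling t -> std_below l t ->
  exists t', [/\ reach t t', tiling t' & std_below l.+2 t'].
Proof.
have [k] := ubnP #|gaps t|; elim: k => // k IHk in t *.
move=> gk tt below; case: (set_0Vmem (gaps t)) => [g0|[y0 y0gap]].
  exists t; split=> //; first exact: rt_refl.
  by apply: std_below_pair => // y; move/setP: g0 => /(_ y); rewrite !inE => /negbFE.
have [t1 [r1 tt1 below1 /proper_card lt1]] := fill_gap tt below y0gap.
have [t2 [r2 tt2 below2]] := IHk t1 (leq_trans lt1 gk) tt1 below1.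
by exists t2; split=> //; apply: rt_trans r1 r2.
Qed.

End RowPair.

Lemma reach_std t : tiling t -> reach t std_tiling.
Proof.
suff reach_from (i : nat) : ~~ odd i -> i <= r ->
    forall t, tiling t -> std_below i t -> reach t std_tiling.
  by move=> tt; apply: reach_from 0 isT (leq0n r) t tt (std_below0 _).
clear t; have [k] := ubnP (r - i); elim: k => // k IHk in i *.
move=> rik i_even ir t tt below; case: (ltnP i r) => [lt_ir|le_ri].
- have lt_i1r : i.+1 < r by lia.
  have [t' [r' tt' below']] :=
    fill_row_pair (l := Ordinal lt_ir) (l1 := Ordinal lt_i1r) i_even erefl tt below.
  by apply: rt_trans r' (IHk i.+2 _ _ _ t' tt' below'); rewrite /= ?negbK //; lia.
- have ri : i = r by lia.
  by rewrite ri in below; rewrite (std_below_top tt below); apply: rt_refl.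
Qed.

End EvenHeightOddWidth.

End WideCylinder.
End Tilings.

Theorem flip_graph_connected_odd_width r c :
  1 < c -> odd c -> ~~ odd r -> flip_graph_connected r c.
Proof.
move=> c_gt1 c_odd r_even; split; first by exists (std_tiling r c); apply: tiling_std.
move=> t1 t2 tt1 tt2; apply: rt_trans (reach_std c_gt1 r_even c_odd tt1) _.
exact: reach_sym c_gt1 _ _ (reach_std c_gt1 r_even c_odd tt2).
Qed.

Theorem corollary3p5 (n m : nat) :
  1 <= n -> 1 <= m -> flip_graph_connected (2 * m) (2 * n + 1).
Proof.
move=> n_ge1 _; apply: flip_graph_connected_odd_width; first lia.
- by rewrite oddD oddM.
- by rewrite oddM.
Qed.
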